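(* Let $N\ge3$ and $p>p_S$. There is no function $u\in C^2(0,\infty)$ satisfying \[ u''+\frac{N-1}{s}u'+f(u)=0\ (0<s<\infty),\quad u(s)=As^{-\theta}(1+o(1))\ (s\downarrow0),\quad u(s)\to0\ (s\to\infty),\quad u>0\ \text{on }(0,\infty). \]
   Context: $f(u):=-u+u^p$, $\theta:=\frac{2}{p-1}$, $A:=\{\theta(N-2-\theta)\}^{1/(p-1)}$, $p_S:=\frac{N+2}{N-2}$. *)

From Stdlib Require Import Reals Lra.
Open Scope R_scope.

(* f(u) = -u + u^p ; only evaluated at u > 0 here, real exponent via Rpower. *)
Definition fnl (p u : R) : R := - u + Rpower u p.

Definition theta (p : R) : R := 2 / (p - 1).

Definition Acoef (N : nat) (p : R) : R :=
  Rpower (theta p * (INR N - 2 - theta p)) (1 / (p - 1)).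

Definition pS (N : nat) : R := (INR N + 2) / (INR N - 2).

Definition C2_pos (u u1 u2 : R -> R) : Prop :=
  forall s, 0 < s ->
    derivable_pt_lim u s (u1 s) /\
    derivable_pt_lim u1 s (u2 s) /\
    continuity_pt u2 s.

From Stdlib Require Import Reals Lra Lia Factorial.
From Coquelicot Require Import Coquelicot.
Open Scope R_scope.

(* For a positive solution u, the Pohozaev function
     P(s) = s^N (u'^2/2 - u^2/2 + u^(p+1)/(p+1)) + (N-2)/2 s^(N-1) u u'
   satisfies P'(s) = s^(N-1) (-u^2 + (N/(p+1) - (N-2)/2) u^(p+1)), and the
   coefficient N/(p+1) - (N-2)/2 is negative exactly when p > p_S, so P is
   strictly decreasing on (0, oo).
   Near the origin u = O(s^-theta), and the mean value theorem on [t/2, t]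
   gives points xi in every such interval with xi u'(xi) = O(xi^-theta); each
   term of P(xi) is then O(xi^(N-2-2 theta)) with N - 2 - 2 theta > 0, so P
   takes values below any eps > 0 arbitrarily close to 0, hence P < 0 on (0, oo).
   At infinity u^p is eventually below u/2; then u decreases, u'' >= u/2 and
   u'^2 >= u^2/2, so u' <= -u/2 and u decays like e^(-s/2).  This forces
   P(s) >= -C/s for large s, contradicting P(s) <= P(1) < 0. *)


Lemma deriv_nonneg_incr (f f' : R -> R) a b : a <= b ->
  (forall c, a <= c <= b -> derivable_pt_lim f c (f' c)) ->
  (forall c, a <= c <= b -> 0 <= f' c) -> f a <= f b.
Proof.
intros hab hf hf'. destruct (Rle_lt_or_eq_dec _ _ hab) as [hlt|<-]; [|lra].
destruct (MVT_cor2 f f' a b hlt hf) as [c [hmvt hc]].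
assert (0 <= f' c) by (apply hf'; lra). nra.
Qed.

Lemma deriv_nonpos_decr (f f' : R -> R) a b : a <= b ->
  (forall c, a <= c <= b -> derivable_pt_lim f c (f' c)) ->
  (forall c, a <= c <= b -> f' c <= 0) -> f b <= f a.
Proof.
intros hab hf hf'.
enough (- f a <= - f b) by lra.
apply (deriv_nonneg_incr (fun x => - f x) (fun x => - f' x)); [exact hab| |].
- intros c hc. exact (derivable_pt_lim_opp f c (f' c) (hf c hc)).
- intros c hc. specialize (hf' c hc). lra.
Qed.

Lemma deriv_neg_strict_decr (f f' : R -> R) a b : a < b ->
  (forall c, a <= c <= b -> derivable_pt_lim f c (f' c)) ->
  (forall c, a <= c <= b -> f' c < 0) -> f b < f a.
Proof.
intros hab hf hf'.
destruct (MVT_cor2 f f' a b hab hf) as [c [hmvt hc]].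
assert (f' c < 0) by (apply hf'; lra). nra.
Qed.

Lemma vanishing_eventually_below (u : R -> R) :
  (forall eps, 0 < eps -> exists M, forall s, M < s -> Rabs (u s) < eps) ->
  forall c a, 0 < c -> exists s, a < s /\ Rabs (u s) < c.
Proof.
intros hdecay c a hc. destruct (hdecay c hc) as [M hM].
exists (Rmax M a + 1). pose proof (Rmax_l M a). pose proof (Rmax_r M a).
split; [lra|]. apply hM. lra.
Qed.

Lemma pow_le_fact_exp n x : 0 <= x -> x ^ n <= INR (fact n) * exp x.
Proof.
intros hx. pose proof (INR_fact_lt_0 n) as hfact.
enough (hdiv : x ^ n / INR (fact n) <= exp x).
{ apply (Rmult_le_compat_l (INR (fact n))) in hdiv; [|lra].
  replace (INR (fact n) * (x ^ n / INR (fact n))) with (x ^ n) in hdiv by (field; lra).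
  exact hdiv. }
eapply Rle_trans; [|apply (exp_ge_taylor x n hx)].
destruct n as [|n]; [simpl; lra|].
rewrite tech5.
enough (0 <= sum_f_R0 (fun k => x ^ k / INR (fact k)) n) by lra.
apply cond_pos_sum. intros k.
apply Rmult_le_pos; [apply pow_le; exact hx|].
left; apply Rinv_0_lt_compat, INR_fact_lt_0.
Qed.

Lemma pow_le_exp_half n x : 0 <= x -> x ^ n <= 2 ^ n * INR (fact n) * exp (x / 2).
Proof.
intros hx. pose proof (pow_le_fact_exp n (x / 2) ltac:(lra)) as hbound.
assert (h2 : 0 < 2 ^ n) by (apply pow_lt; lra).
unfold Rdiv in hbound. rewrite Rpow_mult_distr, pow_inv in hbound.
apply (Rmult_le_compat_l (2 ^ n)) in hbound; [|lra].
replace (2 ^ n * (x ^ n * / 2 ^ n)) with (x ^ n) in hbound by (field; lra).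
unfold Rdiv. lra.
Qed.

Lemma Rpower_pos x y : 0 < Rpower x y.
Proof. apply exp_pos. Qed.

Lemma Rpower_le_neg x y z : 0 < x -> x <= y -> 0 <= z -> Rpower y (- z) <= Rpower x (- z).
Proof.
intros hx hxy hz. rewrite !Rpower_Ropp.
apply Rinv_le_contravar; [apply Rpower_pos|].
apply Rle_Rpower_l; lra.
Qed.

Lemma Rpower_half_neg x y : 0 < x -> Rpower (x / 2) (- y) = Rpower 2 y * Rpower x (- y).
Proof.
intros hx. unfold Rdiv. rewrite Rmult_comm, <- Rpower_mult_distr by lra.
f_equal. unfold Rpower. rewrite ln_Rinv by lra. f_equal. ring.
Qed.

Lemma pow_pred_mul x n : (1 <= n)%nat -> x ^ n = x * x ^ (n - 1).
Proof. intros hn. replace n with (S (n - 1)) at 1 by lia. reflexivity. Qed.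

Section Supercritical.
Variables (n p : R).
Hypothesis n_ge3 : 3 <= n.
Hypothesis p_super : (n + 2) / (n - 2) < p.

Lemma supercritical_mul : n + 2 < p * (n - 2).
Proof.
apply (Rmult_lt_compat_r (n - 2)) in p_super; [|lra].
replace ((n + 2) / (n - 2) * (n - 2)) with (n + 2) in p_super by (field; lra).
lra.
Qed.

Lemma supercritical_gt1 : 1 < p.
Proof. pose proof supercritical_mul. nra. Qed.

Lemma supercritical_pohozaev_coef : n / (p + 1) - (n - 2) / 2 < 0.
Proof.
pose proof supercritical_mul. pose proof supercritical_gt1.
replace (n / (p + 1) - (n - 2) / 2) with ((n + 2 - p * (n - 2)) / (2 * (p + 1)))
  by (field; lra).
apply Rdiv_neg_pos; lra.
Qed.

Lemma supercritical_theta : 0 < n - 2 - 2 * theta p.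
Proof.
pose proof supercritical_mul. pose proof supercritical_gt1. unfold theta.
replace (n - 2 - 2 * (2 / (p - 1))) with ((p * (n - 2) - (n + 2)) / (p - 1))
  by (field; lra).
apply Rdiv_lt_0_compat; lra.
Qed.

End Supercritical.

Lemma theta_pos p : 1 < p -> 0 < theta p.
Proof. intros hp. unfold theta. apply Rdiv_lt_0_compat; lra. Qed.

Lemma theta_mul_succ p : 1 < p -> theta p * (p + 1) = 2 + 2 * theta p.
Proof. intros hp. unfold theta. field. lra. Qed.

Definition pohozaev (N : nat) (p : R) (u u1 : R -> R) (s : R) : R :=
  s ^ N * (u1 s ^ 2 / 2 - u s ^ 2 / 2 + Rpower (u s) (p + 1) / (p + 1))
  + (INR N - 2) / 2 * s ^ (N - 1) * u s * u1 s.

Lemma pohozaev_derivative N p (u u1 u2 : R -> R) s :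
  (1 <= N)%nat -> 0 < p + 1 -> 0 < s -> 0 < u s ->
  derivable_pt_lim u s (u1 s) -> derivable_pt_lim u1 s (u2 s) ->
  u2 s + (INR N - 1) / s * u1 s + fnl p (u s) = 0 ->
  derivable_pt_lim (pohozaev N p u u1) s
    (s ^ (N - 1) * (- u s ^ 2 + (INR N / (p + 1) - (INR N - 2) / 2) * Rpower (u s) (p + 1))).
Proof.
intros hN hp hs hu du du1 hode.
assert (hpow : is_derive (fun x => Rpower x (p + 1)) (u s) ((p + 1) * Rpower (u s) p)).
{ apply is_derive_Reals. replace p with (p + 1 - 1) at 2 by ring.
  exact (derivable_pt_lim_power (u s) (p + 1) hu). }
apply is_derive_Reals in du, du1. apply is_derive_Reals.
destruct N as [|n]; [lia|]. unfold pohozaev. replace (S n - 1)%nat with n by lia.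
auto_derive; [repeat split; eexists; eassumption|].
replace (Derive (fun x => u x) s) with (u1 s) by (symmetry; apply is_derive_unique; exact du).
replace (Derive (fun x => u1 x) s) with (u2 s) by (symmetry; apply is_derive_unique; exact du1).
replace (Derive (fun x => Rpower x (p + 1)) (u s)) with ((p + 1) * Rpower (u s) p)
  by (symmetry; apply is_derive_unique; exact hpow).
replace (u2 s) with (- ((INR (S n) - 1) / s * u1 s) + u s - Rpower (u s) p)
  by (unfold fnl in hode; lra).
rewrite Rpower_plus, Rpower_1 by exact hu.
change (match n with 0%nat => 1 | S _ => INR n + 1 end) with (INR (S n)).
rewrite S_INR.
destruct n as [|k]; simpl; field; lra.
Qed.

Lemma flux_derivative N p (u u1 u2 : R -> R) s :
  (1 <= N)%nat -> 0 < s -> derivable_pt_lim u1 s (u2 s) ->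
  u2 s + (INR N - 1) / s * u1 s + fnl p (u s) = 0 ->
  derivable_pt_lim (fun x => x ^ (N - 1) * u1 x) s (s ^ (N - 1) * (u s - Rpower (u s) p)).
Proof.
intros hN hs du1 hode.
apply is_derive_Reals in du1. apply is_derive_Reals.
destruct N as [|n]; [lia|]. replace (S n - 1)%nat with n by lia.
auto_derive; [eexists; eassumption|].
replace (Derive (fun x => u1 x) s) with (u2 s) by (symmetry; apply is_derive_unique; exact du1).
replace (u2 s) with (- ((INR (S n) - 1) / s * u1 s) + u s - Rpower (u s) p)
  by (unfold fnl in hode; lra).
rewrite S_INR.
destruct n as [|k]; simpl; field; lra.
Qed.

Section Solution.
Variables (N : nat) (p : R) (u u1 u2 : R -> R).
Hypothesis N_ge2 : (2 <= N)%nat.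
Hypothesis p_gt1 : 1 < p.
Hypothesis u_pos : forall s, 0 < s -> 0 < u s.
Hypothesis u_deriv : forall s, 0 < s -> derivable_pt_lim u s (u1 s).

Lemma INR_N_ge2 : 2 <= INR N.
Proof. apply (le_INR 2 N) in N_ge2. exact N_ge2. Qed.

Lemma pohozaev_le_scaling K L s :
  0 < s -> u s <= K * Rpower s (- theta p) -> Rabs (s * u1 s) <= L * Rpower s (- theta p) ->
  pohozaev N p u u1 s <=
  (L ^ 2 / 2 + (INR N - 2) / 2 * K * L + Rpower K (p + 1) / (p + 1))
  * Rpower s (INR N - 2 - 2 * theta p).
Proof.
intros hs huK hX.
pose proof (u_pos s hs) as hu. pose proof INR_N_ge2 as hN.
set (B := Rpower s (- theta p)) in *. set (E := Rpower s (INR N - 2 - 2 * theta p)).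
set (X := s * u1 s) in *. set (U := Rpower (u s) (p + 1)).
assert (hB : 0 < B) by apply Rpower_pos.
assert (hK : 0 < K) by (apply (Rmult_lt_reg_r B); lra).
assert (hL : 0 <= L * B) by (eapply Rle_trans; [apply Rabs_pos|exact hX]).
assert (hsB : s ^ N * B ^ 2 = s ^ 2 * E).
{ replace (B ^ 2) with (B * B) by ring.
  replace (s ^ 2) with (Rpower s 1 * Rpower s 1) by (rewrite Rpower_1 by lra; ring).
  unfold B, E. rewrite <- (Rpower_pow N s hs), <- !Rpower_plus. f_equal. ring. }
assert (hsBp : s ^ N * Rpower B (p + 1) = E).
{ unfold B, E. rewrite <- (Rpower_pow N s hs), Rpower_mult, <- Rpower_plus. f_equal.
  pose proof (theta_mul_succ p p_gt1). lra. }
assert (hP : pohozaev N p u u1 s =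
  s ^ N / s ^ 2 * (X ^ 2 / 2 + (INR N - 2) / 2 * u s * X) + s ^ N * (- u s ^ 2 / 2 + U / (p + 1))).
{ unfold pohozaev, X, U. rewrite (pow_pred_mul s N) by lia. field. lra. }
assert (hX2 : X ^ 2 <= L ^ 2 * B ^ 2).
{ rewrite <- (pow2_abs X). pose proof (Rabs_pos X). nra. }
assert (huX : u s * X <= K * L * B ^ 2).
{ pose proof (Rle_abs X). nra. }
assert (hU : U <= Rpower K (p + 1) * Rpower B (p + 1)).
{ unfold U. rewrite Rpower_mult_distr by lra. apply Rle_Rpower_l; lra. }
rewrite hP.
apply Rle_trans with (s ^ N * B ^ 2 / s ^ 2 * (L ^ 2 / 2 + (INR N - 2) / 2 * K * L)
                      + s ^ N * Rpower B (p + 1) * (Rpower K (p + 1) / (p + 1))).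
- assert (hsN : 0 < s ^ N) by (apply pow_lt; lra).
  assert (hs2 : 0 < s ^ 2) by (apply pow_lt; lra).
  apply Rplus_le_compat.
  + replace (s ^ N * B ^ 2 / s ^ 2 * (L ^ 2 / 2 + (INR N - 2) / 2 * K * L))
      with (s ^ N / s ^ 2 * (B ^ 2 * (L ^ 2 / 2 + (INR N - 2) / 2 * K * L))) by (field; lra).
    apply Rmult_le_compat_l; [apply Rdiv_le_0_compat; lra|].
    assert ((INR N - 2) / 2 * (u s * X) <= (INR N - 2) / 2 * (K * L * B ^ 2))
      by (apply Rmult_le_compat_l; lra).
    nra.
  + rewrite Rmult_assoc. apply Rmult_le_compat_l; [lra|].
    assert (0 <= u s ^ 2) by nra.
    unfold Rdiv. assert (0 < / (p + 1)) by (apply Rinv_0_lt_compat; lra). nra.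
- right. rewrite hsB, hsBp. field. lra.
Qed.

Section NearZero.
Variables (K delta : R).
Hypothesis K_pos : 0 < K.
Hypothesis delta_pos : 0 < delta.
Hypothesis u_le_singular : forall s, 0 < s < delta -> u s <= K * Rpower s (- theta p).

Lemma mvt_scaled_derivative_bound t : 0 < t < delta -> exists xi, t / 2 < xi < t /\
  Rabs (xi * u1 xi) <= 2 * K * (1 + Rpower 2 (theta p)) * Rpower xi (- theta p).
Proof.
intros ht.
destruct (MVT_cor2 u u1 (t / 2) t) as [xi [hmvt hxi]]; [lra|intros c hc; apply u_deriv; lra|].
exists xi. split; [exact hxi|].
pose proof (theta_pos p p_gt1) as hth.
set (B := Rpower xi (- theta p)).
assert (hB : 0 < B) by apply Rpower_pos.
assert (hut : u t <= K * B).
{ eapply Rle_trans; [apply u_le_singular; lra|].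
  apply Rmult_le_compat_l; [lra|]. apply Rpower_le_neg; lra. }
assert (hut2 : u (t / 2) <= K * Rpower 2 (theta p) * B).
{ eapply Rle_trans; [apply u_le_singular; lra|].
  unfold B. rewrite Rmult_assoc, <- Rpower_half_neg by lra.
  apply Rmult_le_compat_l; [lra|]. apply Rpower_le_neg; lra. }
assert (hu1 : Rabs (u1 xi) * t = 2 * Rabs (u t - u (t / 2))).
{ rewrite hmvt, Rabs_mult, (Rabs_right (t - t / 2)) by lra. field. }
assert (hdiff : Rabs (u t - u (t / 2)) <= u t + u (t / 2)).
{ pose proof (u_pos t ltac:(lra)). pose proof (u_pos (t / 2) ltac:(lra)).
  unfold Rabs; destruct (Rcase_abs (u t - u (t / 2))); lra. }
rewrite Rabs_mult, (Rabs_right xi) by lra.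
pose proof (Rabs_pos (u1 xi)).
assert (xi * Rabs (u1 xi) <= t * Rabs (u1 xi)) by nra.
nra.
Qed.

Lemma pohozaev_small_near_zero : 0 < INR N - 2 - 2 * theta p ->
  forall eps t0, 0 < eps -> 0 < t0 -> exists xi, 0 < xi < t0 /\ pohozaev N p u u1 xi <= eps.
Proof.
intros ha eps t0 heps ht0. pose proof INR_N_ge2.
set (a := INR N - 2 - 2 * theta p) in *.
set (L := 2 * K * (1 + Rpower 2 (theta p))).
set (C := L ^ 2 / 2 + (INR N - 2) / 2 * K * L + Rpower K (p + 1) / (p + 1)).
assert (hL : 0 < L) by (unfold L; pose proof (Rpower_pos 2 (theta p)); nra).
assert (hC : 0 < C).
{ unfold C. pose proof (Rpower_pos K (p + 1)).
  assert (0 < Rpower K (p + 1) / (p + 1)) by (apply Rdiv_lt_0_compat; lra).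
  assert (0 <= (INR N - 2) / 2 * K * L) by (apply Rmult_le_pos; [apply Rmult_le_pos|]; lra).
  nra. }
set (t := Rmin (Rmin t0 (delta / 2)) (Rpower (eps / C) (/ a))).
assert (ht : 0 < t /\ t <= t0 /\ t < delta /\ t <= Rpower (eps / C) (/ a)).
{ unfold t. pose proof (Rpower_pos (eps / C) (/ a)).
  pose proof (Rmin_l (Rmin t0 (delta / 2)) (Rpower (eps / C) (/ a))).
  pose proof (Rmin_r (Rmin t0 (delta / 2)) (Rpower (eps / C) (/ a))).
  pose proof (Rmin_l t0 (delta / 2)). pose proof (Rmin_r t0 (delta / 2)).
  assert (0 < Rmin (Rmin t0 (delta / 2)) (Rpower (eps / C) (/ a)))
    by (repeat apply Rmin_glb_lt; lra).
  lra. }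
destruct (mvt_scaled_derivative_bound t ltac:(lra)) as [xi [hxi hbound]].
exists xi. split; [lra|].
eapply Rle_trans; [apply (pohozaev_le_scaling K L); [lra|apply u_le_singular; lra|exact hbound]|].
fold C. fold a.
assert (hxa : Rpower xi a <= eps / C).
{ apply Rle_trans with (Rpower t a); [apply Rle_Rpower_l; lra|].
  apply Rle_trans with (Rpower (Rpower (eps / C) (/ a)) a); [apply Rle_Rpower_l; lra|].
  rewrite Rpower_mult, Rinv_l, Rpower_1 by (try apply Rdiv_lt_0_compat; lra). lra. }
apply (Rmult_le_compat_l C) in hxa; [|lra].
replace (C * (eps / C)) with eps in hxa by (field; lra). exact hxa.
Qed.
End NearZero.

Hypothesis u1_deriv : forall s, 0 < s -> derivable_pt_lim u1 s (u2 s).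
Hypothesis ode : forall s, 0 < s -> u2 s + (INR N - 1) / s * u1 s + fnl p (u s) = 0.

Lemma pohozaev_strict_decr : INR N / (p + 1) - (INR N - 2) / 2 < 0 ->
  forall a b, 0 < a -> a < b -> pohozaev N p u u1 b < pohozaev N p u u1 a.
Proof.
intros hcoef a b ha hab.
apply (deriv_neg_strict_decr _ (fun s => s ^ (N - 1) *
  (- u s ^ 2 + (INR N / (p + 1) - (INR N - 2) / 2) * Rpower (u s) (p + 1)))); [exact hab| |].
- intros c hc. apply pohozaev_derivative with u2; try lia; try lra;
    [apply u_pos|apply u_deriv|apply u1_deriv|apply ode]; lra.
- intros c hc. pose proof (u_pos c ltac:(lra)). pose proof (Rpower_pos (u c) (p + 1)).
  assert (0 < c ^ (N - 1)) by (apply pow_lt; lra).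
  assert (0 < u c ^ 2) by (apply pow_lt; lra).
  assert ((INR N / (p + 1) - (INR N - 2) / 2) * Rpower (u c) (p + 1) < 0) by nra.
  nra.
Qed.

Hypothesis u_vanishes : forall eps, 0 < eps -> exists M, forall s, M < s -> Rabs (u s) < eps.

Lemma eventually_power_small : exists S0, 1 <= S0 /\ forall s, S0 <= s -> Rpower (u s) p < u s / 2.
Proof.
set (c := Rpower (/ 2) (/ (p - 1))).
destruct (u_vanishes c (Rpower_pos _ _)) as [M hM].
exists (Rmax M 1 + 1). pose proof (Rmax_l M 1). pose proof (Rmax_r M 1).
split; [lra|]. intros s hs.
assert (hu : 0 < u s) by (apply u_pos; lra).
assert (huc : u s < c) by (specialize (hM s ltac:(lra)); rewrite Rabs_right in hM; lra).
assert (hpow : Rpower (u s) (p - 1) < / 2).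
{ replace (/ 2) with (Rpower c (p - 1)).
  - apply Rlt_Rpower_l; lra.
  - unfold c. rewrite Rpower_mult, Rinv_l, Rpower_1 by lra. reflexivity. }
replace p with (1 + (p - 1)) at 1 by ring.
rewrite Rpower_plus, Rpower_1 by lra. nra.
Qed.

Section Tail.
Variable S0 : R.
Hypothesis S0_ge1 : 1 <= S0.
Hypothesis power_small : forall s, S0 <= s -> Rpower (u s) p < u s / 2.

Lemma tail_u1_nonpos s : S0 <= s -> u1 s <= 0.
Proof.
(* On the tail the flux s^(N-1) u' is nondecreasing, so a positive u' would
   make u nondecreasing from then on, against u -> 0. *)
intros hs1. destruct (Rle_or_lt (u1 s) 0) as [h|h]; [exact h|exfalso].
assert (hflux : forall x, s <= x -> s ^ (N - 1) * u1 s <= x ^ (N - 1) * u1 x).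
{ intros x hx. apply (deriv_nonneg_incr (fun y => y ^ (N - 1) * u1 y)
    (fun y => y ^ (N - 1) * (u y - Rpower (u y) p)));
    [exact hx| |].
  - intros c hc. apply flux_derivative with u2; [lia|lra|apply u1_deriv; lra|apply ode; lra].
  - intros c hc. pose proof (power_small c ltac:(lra)). pose proof (u_pos c ltac:(lra)).
    apply Rmult_le_pos; [apply pow_le; lra|lra]. }
assert (hincr : forall x, s <= x -> u s <= u x).
{ intros x hx. apply (deriv_nonneg_incr u u1); [exact hx| |].
  - intros c hc. apply u_deriv. lra.
  - intros c hc. specialize (hflux c (proj1 hc)).
    assert (0 < s ^ (N - 1)) by (apply pow_lt; lra).
    assert (0 < c ^ (N - 1)) by (apply pow_lt; lra).
    nra. }
pose proof (u_pos s ltac:(lra)) as hus.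
destruct (vanishing_eventually_below u u_vanishes (u s) s hus) as [x [hx hux]].
specialize (hincr x (Rlt_le _ _ hx)).
rewrite Rabs_right in hux; [lra|]. left. apply u_pos. lra.
Qed.

Lemma tail_u2_ge s : S0 <= s -> u s / 2 <= u2 s.
Proof.
intros hs. pose proof (ode s ltac:(lra)) as hode. unfold fnl in hode.
pose proof (power_small s hs). pose proof (tail_u1_nonpos s hs). pose proof INR_N_ge2.
assert (0 <= (INR N - 1) / s) by (apply Rdiv_le_0_compat; lra).
nra.
Qed.

Lemma tail_energy_nonneg s : S0 <= s -> u s ^ 2 / 2 <= u1 s ^ 2.
Proof.
intros hs. destruct (Rle_or_lt (u s ^ 2 / 2) (u1 s ^ 2)) as [h|h]; [exact h|exfalso].
assert (henergy : forall x, s <= x -> u1 x ^ 2 - u x ^ 2 / 2 <= u1 s ^ 2 - u s ^ 2 / 2).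
{ intros x hx.
  apply (deriv_nonpos_decr (fun y => u1 y ^ 2 - u y ^ 2 / 2)
    (fun y => u1 y * (2 * u2 y - u y))); [exact hx| |].
  - intros c hc. pose proof (u_deriv c ltac:(lra)) as du. pose proof (u1_deriv c ltac:(lra)) as du1.
    apply is_derive_Reals in du, du1. apply is_derive_Reals.
    auto_derive; [repeat split; eexists; eassumption|].
    replace (Derive (fun y => u y) c) with (u1 c) by (symmetry; apply is_derive_unique; exact du).
    replace (Derive (fun y => u1 y) c) with (u2 c) by (symmetry; apply is_derive_unique; exact du1).
    field.
  - intros c hc. pose proof (tail_u1_nonpos c ltac:(lra)). pose proof (tail_u2_ge c ltac:(lra)).
    nra. }
set (gap := u s ^ 2 / 2 - u1 s ^ 2).
assert (hc : 0 < Rmin 1 gap) by (apply Rmin_glb_lt; unfold gap; lra).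
destruct (vanishing_eventually_below u u_vanishes _ s hc) as [x [hx hux]].
specialize (henergy x (Rlt_le _ _ hx)).
pose proof (Rmin_l 1 gap). pose proof (Rmin_r 1 gap).
assert (hu : 0 < u x) by (apply u_pos; lra).
rewrite Rabs_right in hux by lra.
assert (u x ^ 2 < u x) by nra.
assert (0 <= u1 x ^ 2) by nra.
unfold gap in *. lra.
Qed.

Lemma tail_u1_le s : S0 <= s -> u1 s <= - u s / 2.
Proof.
intros hs. pose proof (tail_energy_nonneg s hs). pose proof (tail_u1_nonpos s hs).
pose proof (u_pos s ltac:(lra)). nra.
Qed.

Lemma tail_u1_ge s : S0 <= s -> u1 S0 <= u1 s.
Proof.
intros hs. apply (deriv_nonneg_incr u1 u2); [exact hs| |].
- intros c hc. apply u1_deriv. lra.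
- intros c hc. pose proof (tail_u2_ge c ltac:(lra)). pose proof (u_pos c ltac:(lra)). lra.
Qed.

Lemma tail_u_le s : S0 <= s -> u s <= u S0.
Proof.
intros hs. apply (deriv_nonpos_decr u u1); [exact hs| |].
- intros c hc. apply u_deriv. lra.
- intros c hc. apply tail_u1_nonpos. lra.
Qed.

Lemma tail_exp_decay s : S0 <= s -> u s * exp (s / 2) <= u S0 * exp (S0 / 2).
Proof.
intros hs.
apply (deriv_nonpos_decr (fun x => u x * exp (x / 2)) (fun x => exp (x / 2) * (u1 x + u x / 2)));
  [exact hs| |].
- intros c hc. pose proof (u_deriv c ltac:(lra)) as du.
  apply is_derive_Reals in du. apply is_derive_Reals.
  auto_derive; [eexists; eassumption|].
  replace (Derive (fun y => u y) c) with (u1 c) by (symmetry; apply is_derive_unique; exact du).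
  unfold Rdiv. ring.
- intros c hc. pose proof (tail_u1_le c ltac:(lra)). pose proof (exp_pos (c / 2)). nra.
Qed.

Lemma tail_pohozaev_ge s : S0 <= s ->
  - (s ^ N * u s) * (u S0 / 2 - (INR N - 2) / 2 * u1 S0) <= pohozaev N p u u1 s.
Proof.
intros hs. unfold pohozaev.
pose proof (u_pos s ltac:(lra)) as hu. pose proof (tail_u_le s hs) as huS0.
pose proof (tail_u1_ge s hs) as hu1. pose proof (tail_u1_nonpos S0 (Rle_refl _)) as hu1S0.
pose proof INR_N_ge2.
assert (hsN1 : 0 < s ^ (N - 1)) by (apply pow_lt; lra).
assert (hsN : s ^ (N - 1) <= s ^ N) by (apply Rle_pow; [lra|lia]).
assert (hU : 0 <= Rpower (u s) (p + 1) / (p + 1))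
  by (left; apply Rdiv_lt_0_compat; [apply Rpower_pos|lra]).
assert (hkin : - (s ^ N * u s) * (u S0 / 2) <=
  s ^ N * (u1 s ^ 2 / 2 - u s ^ 2 / 2 + Rpower (u s) (p + 1) / (p + 1))).
{ assert (0 < s ^ N) by (apply pow_lt; lra).
  assert (0 <= s ^ N * (u1 s ^ 2 / 2 + Rpower (u s) (p + 1) / (p + 1)))
    by (pose proof (pow2_ge_0 (u1 s)); apply Rmult_le_pos; lra).
  assert (s ^ N * u s * u s <= s ^ N * u s * u S0) by (apply Rmult_le_compat_l; nra).
  nra. }
assert (hflux : s ^ N * u1 S0 <= s ^ (N - 1) * u1 s) by nra.
assert (hcross : (INR N - 2) / 2 * u s * (s ^ N * u1 S0) <= (INR N - 2) / 2 * u s * (s ^ (N - 1) * u1 s)).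
{ apply Rmult_le_compat_l; [|exact hflux]. apply Rmult_le_pos; lra. }
nra.
Qed.

Lemma tail_weighted_decay s : S0 <= s ->
  s ^ S N * u s <= 2 ^ S N * INR (fact (S N)) * (u S0 * exp (S0 / 2)).
Proof.
intros hs. pose proof (pow_le_exp_half (S N) s ltac:(lra)) as hpow.
pose proof (tail_exp_decay s hs). pose proof (u_pos s ltac:(lra)).
assert (0 <= 2 ^ S N * INR (fact (S N))) by (apply Rmult_le_pos; [apply pow_le; lra|apply pos_INR]).
nra.
Qed.

Lemma tail_pohozaev_lower_bound : exists C, forall s, S0 <= s -> - C / s <= pohozaev N p u u1 s.
Proof.
set (K3 := u S0 / 2 - (INR N - 2) / 2 * u1 S0).
set (W := 2 ^ S N * INR (fact (S N)) * (u S0 * exp (S0 / 2))).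
exists (K3 * W). intros s hs.
assert (hK3 : 0 <= K3).
{ pose proof (u_pos S0 ltac:(lra)). pose proof (tail_u1_nonpos S0 (Rle_refl _)).
  pose proof INR_N_ge2. unfold K3.
  assert (0 <= (INR N - 2) / 2 * - u1 S0) by (apply Rmult_le_pos; lra).
  lra. }
assert (hW : s ^ N * u s <= W / s).
{ apply (Rmult_le_reg_r s); [lra|].
  replace (W / s * s) with W by (field; lra).
  replace (s ^ N * u s * s) with (s ^ S N * u s) by (simpl; ring).
  apply tail_weighted_decay. exact hs. }
eapply Rle_trans; [|apply tail_pohozaev_ge; exact hs]. fold K3.
replace (- (K3 * W) / s) with (- (W / s) * K3) by (field; lra).
nra.
Qed.

End Tail.

Lemma pohozaev_eventually_gt eta a : 0 < eta -> exists s, a < s /\ - eta < pohozaev N p u u1 s.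
Proof.
intros heta.
destruct eventually_power_small as [S0 [hS0 hsmall]].
destruct (tail_pohozaev_lower_bound S0 hS0 hsmall) as [C hC].
set (s := Rmax (Rmax a S0) (C / eta) + 1).
assert (hs : a < s /\ S0 < s /\ C / eta < s).
{ unfold s. pose proof (Rmax_l (Rmax a S0) (C / eta)). pose proof (Rmax_r (Rmax a S0) (C / eta)).
  pose proof (Rmax_l a S0). pose proof (Rmax_r a S0). lra. }
exists s. split; [lra|].
eapply Rlt_le_trans; [|apply hC; lra].
assert (hCs : C < eta * s).
{ destruct hs as [_ [_ hs]]. apply (Rmult_lt_compat_l eta) in hs; [|lra].
  replace (eta * (C / eta)) with C in hs by (field; lra). lra. }
apply (Rmult_lt_reg_r s); [lra|].
replace (- C / s * s) with (- C) by (field; lra). lra.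
Qed.
End Solution.

Lemma expansion_upper_bound (u r : R -> R) A th : 0 < A ->
  (forall s, 0 < s -> u s = A * Rpower s (- th) * (1 + r s)) ->
  (forall eps, 0 < eps -> exists delta, 0 < delta /\ forall s, 0 < s < delta -> Rabs (r s) < eps) ->
  exists delta, 0 < delta /\ forall s, 0 < s < delta -> u s <= 2 * A * Rpower s (- th).
Proof.
intros hA hu hr. destruct (hr 1 ltac:(lra)) as [delta [hdelta hsmall]].
exists delta. split; [exact hdelta|]. intros s hs.
rewrite hu by lra. specialize (hsmall s hs).
pose proof (Rle_abs (r s)). pose proof (Rpower_pos s (- th)).
assert (0 < A * Rpower s (- th)) by (apply Rmult_lt_0_compat; lra).
nra.
Qed.

Theorem lemma4p7 (N : nat) (p : R) (hN : (3 <= N)%nat) (hp : pS N < p) :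
  ~ (exists u u1 u2 : R -> R,
        C2_pos u u1 u2 /\
        (forall s, 0 < s -> u2 s + (INR N - 1) / s * u1 s + fnl p (u s) = 0) /\
        (exists r : R -> R,
            (forall s, 0 < s ->
               u s = Acoef N p * Rpower s (- theta p) * (1 + r s)) /\
            (forall eps, 0 < eps -> exists delta, 0 < delta /\
               forall s, 0 < s < delta -> Rabs (r s) < eps)) /\
        (forall eps, 0 < eps -> exists M, forall s, M < s -> Rabs (u s) < eps) /\
        (forall s, 0 < s -> 0 < u s)).
Proof.
intros [u [u1 [u2 [hC2 [hode [[r [hexp hr]] [hvan hpos]]]]]]].
assert (hN2 : (2 <= N)%nat) by lia.
assert (hn : 3 <= INR N) by (replace 3 with (INR 3) by (simpl; ring); apply le_INR; exact hN).
pose proof (supercritical_gt1 _ _ hn hp) as hp1.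
assert (du : forall s, 0 < s -> derivable_pt_lim u s (u1 s)) by (intros s hs; apply hC2, hs).
assert (du1 : forall s, 0 < s -> derivable_pt_lim u1 s (u2 s)) by (intros s hs; apply hC2, hs).
pose proof (pohozaev_strict_decr N p u u1 u2 hN2 hp1 hpos du du1 hode
  (supercritical_pohozaev_coef _ _ hn hp)) as hdecr.
assert (hA : 0 < Acoef N p) by apply Rpower_pos.
destruct (expansion_upper_bound u r (Acoef N p) (theta p) hA hexp hr)
  as [delta [hdelta hbound]].
assert (hhalf : pohozaev N p u u1 (1 / 2) <= 0).
{ destruct (Rle_or_lt (pohozaev N p u u1 (1 / 2)) 0) as [h|h]; [exact h|].
  destruct (pohozaev_small_near_zero N p u u1 hN2 hp1 hpos du (2 * Acoef N p) delta
    ltac:(lra) hdelta hbound (supercritical_theta _ _ hn hp) _ (1 / 2) h ltac:(lra)) as [xi [hxi hP]].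
  pose proof (hdecr xi (1 / 2) ltac:(lra) ltac:(lra)). lra. }
pose proof (hdecr (1 / 2) 1 ltac:(lra) ltac:(lra)) as hone.
destruct (pohozaev_eventually_gt N p u u1 u2 hN2 hp1 hpos du du1 hode hvan
  (- pohozaev N p u u1 1) 1 ltac:(lra)) as [s [hs hPs]].
pose proof (hdecr 1 s ltac:(lra) hs). lra.
Qed.
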